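(* Let $W$ be an ordered vector space which is monotone complete and which carries a faithful normal positive linear functional $\psi$. Let $J$ be a non-empty, upper bounded, upward directed subset of $W$. Then there exists an increasing sequence $(j_n)_{n\geq 1}$ in $J$ such that $\sup_n j_n = \sup J$ (suprema taken in $W$). Moreover, every increasing sequence $(j_n)_{n\ge 1}$ in $J$ satisfying \[ \sup_{n\geq 1}\psi(j_n) = \sup_{j\in J}\psi(j) \] satisfies $\sup_n j_n = \sup J$.
   Context: An ordered vector space $W$ is called monotone complete if every non-empty upper bounded upward directed subset of $W$ has a supremum in $W$. A positive linear functional $\psi$ on $W$ is called faithful if $\psi(a)>0$ for every $a\in W_+\setminus\{0\}$, where $W_+$ is the set of positive elements of $W$. A positive linear map $\phi$ between monotone complete ordered vector spaces is called normal if $\phi(\sup J)=\sup_{j\in J}\phi(j)$ for every non-empty upper bounded upward directed subset $J$ of the domain. (Example: $W$ the Hermitian part of a $\sigma$-finite von Neumann algebra.) *)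

From HB Require Import structures.
From mathcomp Require Import all_boot all_order all_algebra.
From mathcomp Require Import classical_sets reals.
Set Implicit Arguments. Unset Strict Implicit. Unset Printing Implicit Defensive.
Import Order.TTheory GRing.Theory Num.Theory.
Local Open Scope ring_scope.
Local Open Scope classical_set_scope.

Definition ordered_vspace (R : realType) (W : lmodType R) (le : W -> W -> Prop) :=
  [/\ (forall x, le x x),
      (forall x y, le x y -> le y x -> x = y),
      (forall x y z, le x y -> le y z -> le x z),
      (forall x y z, le x y -> le (x + z) (y + z)) &
      (forall (a : R) x y, 0 <= a -> le x y -> le (a *: x) (a *: y))].

Definition upper_bound {T} (le : T -> T -> Prop) (A : set T) (u : T) :=
  forall a, A a -> le a u.

Definition upper_bounded {T} (le : T -> T -> Prop) (A : set T) :=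
  exists u, upper_bound le A u.

Definition upward_directed {T} (le : T -> T -> Prop) (A : set T) :=
  forall a b, A a -> A b -> exists2 c, A c & le a c /\ le b c.

Definition is_sup {T} (le : T -> T -> Prop) (A : set T) (s : T) :=
  upper_bound le A s /\ forall u, upper_bound le A u -> le s u.

Definition monotone_complete {T} (le : T -> T -> Prop) :=
  forall A : set T, A !=set0 -> upper_bounded le A -> upward_directed le A ->
    exists s, is_sup le A s.

Definition linear_functional (R : realType) (W : lmodType R) (psi : W -> R) :=
  forall (a : R) x y, psi (a *: x + y) = a * psi x + psi y.

Definition positive_functional (R : realType) (W : lmodType R)
  (le : W -> W -> Prop) (psi : W -> R) :=
  linear_functional psi /\ forall x, le 0 x -> 0 <= psi x.

Definition faithful_functional (R : realType) (W : lmodType R)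
  (le : W -> W -> Prop) (psi : W -> R) :=
  forall x, le 0 x -> x <> 0 -> 0 < psi x.

Definition normal_functional (R : realType) (W : lmodType R)
  (le : W -> W -> Prop) (psi : W -> R) :=
  forall (A : set W) (s : W), A !=set0 -> upper_bounded le A ->
    upward_directed le A -> is_sup le A s ->
    is_sup (fun x y : R => x <= y) (psi @` A) (psi s).

(* Normality of psi identifies sup psi(J) with psi(sup J).  For an increasing
   sequence in J with sup psi(j_n) = sup psi(J), the supremum r of the j_n
   satisfies r <= sup J and, again by normality, psi r = psi (sup J); the
   faithfulness of psi applied to sup J - r >= 0 forces r = sup J.  Such a
   sequence exists: pick a_n in J with psi a_n > psi (sup J) - 1/(n+1) and
   use directedness to build an increasing j_n in J dominating a_n. *)
From HB Require Import structures.
From mathcomp Require Import all_boot all_order all_algebra.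
From mathcomp Require Import classical_sets reals.
From mathcomp Require Import boolp.
Set Implicit Arguments. Unset Strict Implicit. Unset Printing Implicit Defensive.
Import Order.TTheory GRing.Theory Num.Theory.
Local Open Scope ring_scope.
Local Open Scope classical_set_scope.

Section OrderedSets.
Variables (T : Type) (le : T -> T -> Prop).

Lemma is_sup_unique (A : set T) (s t : T) :
  (forall x y, le x y -> le y x -> x = y) ->
  is_sup le A s -> is_sup le A t -> s = t.
Proof.
by move=> anti [ubs leasts] [ubt leastt]; apply: anti; [apply: leasts|apply: leastt].
Qed.

Hypotheses (le_refl : forall x, le x x)
           (le_trans : forall x y z, le x y -> le y z -> le x z).

Lemma nondecreasing_seq_le (j : nat -> T) :
  (forall n, le (j n) (j n.+1)) -> forall m n, (m <= n)%N -> le (j m) (j n).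
Proof.
move=> jS m; elim=> [|n IHn]; first by rewrite leqn0 => /eqP ->.
by rewrite leq_eqVlt => /orP[/eqP ->|/IHn lejm]; last exact: le_trans lejm (jS n).
Qed.

Lemma upward_directed_range (j : nat -> T) :
  (forall n, le (j n) (j n.+1)) -> upward_directed le (range j).
Proof.
move=> jS _ _ [m _ <-] [n _ <-]; exists (j (maxn m n)); first by exists (maxn m n).
by split; apply: nondecreasing_seq_le; rewrite ?leq_maxl ?leq_maxr.
Qed.

Lemma upward_directed_dominating_seq (J : set T) (a : nat -> T) :
  upward_directed le J -> (forall n, J (a n)) ->
  exists j : nat -> T, [/\ forall n, J (j n), forall n, le (j n) (j n.+1)
                         & forall n, le (a n) (j n)].
Proof.
move=> dirJ Ja.
have /choice[up upP] : forall p : T * T,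
    exists c, J p.1 -> J p.2 -> [/\ J c, le p.1 c & le p.2 c].
  case=> x y /=; have [[Jx Jy]|nJxy] := pselect (J x /\ J y).
    by have [c Jc [lexc leyc]] := dirJ x y Jx Jy; exists c.
  by exists x => Jx Jy; exfalso; apply: nJxy.
pose fix j n := if n is n'.+1 then up (j n', a n) else a 0%N.
have Jj n : J (j n) by elim: n => [|n IHn] //=; have [] := upP (_, _) IHn (Ja n.+1).
exists j; split=> // n; first by have [] := upP (_, _) (Jj n) (Ja n.+1).
by case: n => [|n] //=; have [] := upP (_, _) (Jj n) (Ja n.+1).
Qed.

End OrderedSets.

Lemma is_sup_approx (R : realDomainType) (A : set R) (t eps : R) :
  is_sup (fun x y : R => x <= y) A t -> 0 < eps -> exists2 x, A x & t - eps < x.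
Proof.
move=> [_ leastt] eps_gt0; apply: contrapT => noapprox.
have : t <= t - eps.
  by apply: leastt => x Ax; rewrite leNgt; apply/negP => ltx; apply: noapprox; exists x.
by rewrite lerDl oppr_ge0 leNgt eps_gt0.
Qed.

Lemma is_sup_range_approx (R : realType) (x : nat -> R) (t : R) :
  (forall n, x n <= t) -> (forall n, t - n.+1%:R^-1 < x n) ->
  is_sup (fun x y : R => x <= y) (range x) t.
Proof.
move=> xle xapprox; split=> [_ [n _ <-] //|u ubu].
rewrite leNgt; apply/negP => /ltr_add_invr[k ltukt].
have := xapprox k; rewrite ltrBlDr => /(lt_trans ltukt).
by rewrite ltrD2r ltNge ubu //; exists k.
Qed.

Section PositiveFunctionals.
Variables (R : realType) (W : lmodType R) (le : W -> W -> Prop) (psi : W -> R).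
Hypotheses (ordW : ordered_vspace le) (pos_psi : positive_functional le psi).

Lemma linear_functionalB x y : psi (y - x) = psi y - psi x.
Proof. by have [lin _] := pos_psi; rewrite addrC -scaleN1r lin mulN1r addrC. Qed.

Lemma ordered_vspace_subr_ge0 x y : le x y -> le 0 (y - x).
Proof. by case: ordW => _ _ _ addm _ /(addm _ _ (- x)); rewrite subrr. Qed.

Lemma positive_functional_mono x y : le x y -> psi x <= psi y.
Proof.
by move=> /ordered_vspace_subr_ge0 /pos_psi.2; rewrite linear_functionalB subr_ge0.
Qed.

Lemma faithful_functional_eq x y :
  faithful_functional le psi -> le x y -> psi x = psi y -> x = y.
Proof.
move=> faith lexy psixy; apply/eqP; rewrite eq_sym -subr_eq0; apply/eqP.
apply: contrapT => /(faith _ (ordered_vspace_subr_ge0 lexy)).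
by rewrite linear_functionalB psixy subrr ltxx.
Qed.

Lemma faithful_normal_is_sup_seq (J : set W) (s : W) (j : nat -> W) :
  monotone_complete le -> faithful_functional le psi -> normal_functional le psi ->
  J !=set0 -> upper_bounded le J -> upward_directed le J -> is_sup le J s ->
  (forall n, J (j n)) -> (forall n, le (j n) (j n.+1)) ->
  (exists t : R, is_sup (fun x y : R => x <= y) (psi @` J) t /\
                 is_sup (fun x y : R => x <= y) (range (psi \o j)) t) ->
  is_sup le (range j) s.
Proof.
move=> mc faith norm J0 Jb dirJ supJ Jj jS [t [supJt supjt]].
have [le_refl _ le_trans _ _] := ordW.
have j0 : range j !=set0 by exists (j 0%N), 0%N.
have ubjs : upper_bound le (range j) s by move=> _ [n _ <-]; apply: supJ.1.
have dirj := upward_directed_range le_refl le_trans jS.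
have jb : upper_bounded le (range j) by exists s.
have [r supjr] := mc _ j0 jb dirj.
have ler_anti x y : x <= y -> y <= x -> x = y :> R.
  by move=> lexy leyx; apply/le_anti; rewrite lexy leyx.
have psir : psi r = t.
  apply: is_sup_unique ler_anti _ supjt.
  by have := norm _ _ j0 jb dirj supjr; rewrite image_comp.
have psis : psi s = t.
  exact: is_sup_unique ler_anti (norm _ _ J0 Jb dirJ supJ) supJt.
have <- // : r = s.
by apply: faithful_functional_eq => //; [apply: supjr.2 | rewrite psir psis].
Qed.

End PositiveFunctionals.

Theorem theorem1 (R : realType) (W : lmodType R) (le : W -> W -> Prop)
  (psi : W -> R) (J : set W) :
  ordered_vspace le -> monotone_complete le ->
  positive_functional le psi -> faithful_functional le psi ->
  normal_functional le psi ->
  J !=set0 -> upper_bounded le J -> upward_directed le J ->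
  forall s : W, is_sup le J s ->
  (exists j : nat -> W, (forall n, J (j n)) /\ (forall n, le (j n) (j n.+1)) /\
      is_sup le (range j) s) /\
  (forall j : nat -> W, (forall n, J (j n)) -> (forall n, le (j n) (j n.+1)) ->
      (exists t : R, is_sup (fun x y : R => x <= y) (psi @` J) t /\
                     is_sup (fun x y : R => x <= y) (range (psi \o j)) t) ->
      is_sup le (range j) s).
Proof.
move=> ordW mc pos faith norm J0 Jb dirJ s supJ.
have seq_sup := faithful_normal_is_sup_seq ordW pos mc faith norm J0 Jb dirJ supJ.
split; last exact: seq_sup.
have psi_sup := norm J s J0 Jb dirJ supJ.
have /choice[a aP] n : exists a, J a /\ psi s - n.+1%:R^-1 < psi a.
  have [|_ [a Ja <-] ltpa] := is_sup_approx (eps := n.+1%:R^-1) psi_sup.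
    by rewrite invr_gt0.
  by exists a.
have [le_refl _ _ _ _] := ordW.
have [j [Jj jS leaj]] :=
  upward_directed_dominating_seq le_refl dirJ (fun n => (aP n).1).
exists j; split=> //; split=> //.
apply: seq_sup => //; exists (psi s); split=> //.
apply: is_sup_range_approx => n /=; first by apply: psi_sup.1; exists (j n).
exact: lt_le_trans (aP n).2 (positive_functional_mono ordW pos (leaj n)).
Qed.
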